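(* Let $x=x_1\cdots x_n\in S_n$. If $x_i$ is a left-to-right minimum of $x$ and $x_i$ appears to the left of $x_j$ in $s_{132,321}(x)$, then $j<i$.
   Context: An entry $x_i$ is a left-to-right minimum of $x$ if it is smaller than every entry to its left. A permutation contains a pattern $p$ if it has a subsequence order-isomorphic to $p$; otherwise it avoids $p$. The map $s_{132,321}$ is defined as follows: the entries of the input permutation are read from left to right, with an initially empty stack. At each step, if the input is nonempty and pushing the next input entry onto the stack produces a stack whose contents, read from top to bottom, avoid both $132$ and $321$, that entry is pushed; otherwise the top entry of the stack is popped and appended to the output. When the input is exhausted, the remaining stack entries are popped one at a time to the output. $s_{132,321}(x)$ is the output word. *)

From mathcomp Require Import all_boot.
Set Implicit Arguments. Unset Strict Implicit. Unset Printing Implicit Defensive.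

(* Permutations are sequences of naturals; entries are 0-indexed positions. *)

Definition contains132 (s : seq nat) : bool :=
  has (fun i => has (fun j => has (fun k =>
    [&& (i < j)%N, (j < k)%N,
        (nth 0 s i < nth 0 s k)%N & (nth 0 s k < nth 0 s j)%N])
    (iota 0 (size s))) (iota 0 (size s))) (iota 0 (size s)).

Definition contains321 (s : seq nat) : bool :=
  has (fun i => has (fun j => has (fun k =>
    [&& (i < j)%N, (j < k)%N,
        (nth 0 s j < nth 0 s i)%N & (nth 0 s k < nth 0 s j)%N])
    (iota 0 (size s))) (iota 0 (size s))) (iota 0 (size s)).

(* stack is a list whose head is the top; read top-to-bottom = the list itself *)
Definition stack_ok (st : seq nat) : bool :=
  ~~ contains132 st && ~~ contains321 st.

Fixpoint pop_until (a : nat) (st out : seq nat) : seq nat * seq nat :=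
  if stack_ok (a :: st) then (st, out) else
  match st with
  | [::] => (st, out)
  | b :: st' => pop_until a st' (rcons out b)
  end.

Fixpoint run (inp st out : seq nat) : seq nat :=
  match inp with
  | [::] => out ++ st
  | a :: inp' =>
      let p := pop_until a st out in run inp' (a :: p.1) p.2
  end.

Definition s132_321 (x : seq nat) : seq nat := run x [::] [::].

Definition ltr_min (x : seq nat) (i : nat) : Prop :=
  forall k, (k < i)%N -> (nth 0 x i < nth 0 x k)%N.

(* When a left-to-right minimum v is pushed, it is smaller than every entry
   below it, so avoiding 132 forces the stack v :: rest to be weakly
   increasing from top to bottom.  Pushing any entry onto a stack whose part
   below the top is weakly increasing never creates 132 or 321, so v and the
   entries below it are never popped before the input is exhausted: every
   entry read after v leaves the stack before v does. *)

From mathcomp Require Import all_boot.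
From mathcomp Require Import zify.

Lemma contains132P s :
  reflect (exists i j k, [/\ i < j < k, k < size s
                           & nth 0 s i < nth 0 s k < nth 0 s j])
          (contains132 s).
Proof.
apply: (iffP idP).
  case/hasP=> i _ /hasP[j _ /hasP[k]]; rewrite mem_iota => /andP[_ ks].
  by case/and4P=> ij jk ik kj; exists i, j, k; rewrite ij jk ik kj; split.
case=> i [j [k [/andP[ij jk] ks /andP[ik kj]]]].
apply/hasP; exists i; first by rewrite mem_iota; lia.
apply/hasP; exists j; first by rewrite mem_iota; lia.
by apply/hasP; exists k; rewrite ?mem_iota ?ij ?jk ?ik ?kj //; lia.
Qed.

Lemma contains321P s :
  reflect (exists i j k, [/\ i < j < k, k < size s
                           & nth 0 s k < nth 0 s j < nth 0 s i])
          (contains321 s).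
Proof.
apply: (iffP idP).
  case/hasP=> i _ /hasP[j _ /hasP[k]]; rewrite mem_iota => /andP[_ ks].
  by case/and4P=> ij jk ji kj; exists i, j, k; rewrite ij jk ji kj; split.
case=> i [j [k [/andP[ij jk] ks /andP[kj ji]]]].
apply/hasP; exists i; first by rewrite mem_iota; lia.
apply/hasP; exists j; first by rewrite mem_iota; lia.
by apply/hasP; exists k; rewrite ?mem_iota ?ij ?jk ?ji ?kj //; lia.
Qed.

(* Both patterns need a strict descent strictly below the top of the stack. *)
Lemma stack_ok_cons_sorted a s : sorted leq s -> stack_ok (a :: s).
Proof.
move=> s_sorted.
have no_descent j k : j < k < size s -> nth 0 s j <= nth 0 s k.
  by case/andP=> jk ks; apply: (sorted_ltn_nth leq_trans) => //; rewrite inE; lia.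
apply/andP; split; apply/negP.
  case/contains132P=> i [[|j] [[|k] [/andP[ij jk] /= ks /andP[_ kj]]]] //.
  by have := no_descent j k; lia.
case/contains321P=> i [[|j] [[|k] [/andP[ij jk] /= ks /andP[kj _]]]] //.
by have := no_descent j k; lia.
Qed.

Lemma stack_ok_sorted_min v s :
  stack_ok (v :: s) -> all (ltn v) s -> sorted leq (v :: s).
Proof.
move=> /andP[/contains132P no132 _] /allP v_min; apply/(sortedP 0) => -[|m] /= ms.
  by apply: ltnW; apply: v_min; apply: mem_nth; exact: ms.
rewrite leqNgt; apply/negP=> descent; apply: no132.
exists 0, m.+1, m.+2; split=> //=; rewrite descent andbT.
by apply: v_min; apply: mem_nth; exact: ms.
Qed.

Lemma pop_until_cat a st out :
  (pop_until a st out).2 ++ (pop_until a st out).1 = out ++ st.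
Proof.
elim: st out => [|b st IH] out //=.
by case: ifP => // _; rewrite IH cat_rcons.
Qed.

Lemma pop_until_ok a st out : stack_ok (a :: (pop_until a st out).1).
Proof. by elim: st out => [|b st IH] out //=; case: ifP. Qed.

Lemma pop_until_stop a st out : stack_ok (a :: st) -> pop_until a st out = (st, out).
Proof. by case: st => [|b st] //= ->. Qed.

Lemma pop_until_sorted_bottom a above bot out : sorted leq bot ->
  exists above', (pop_until a (above ++ bot) out).1 = above' ++ bot.
Proof.
move=> bot_sorted; elim: above out => [|b above IH] out /=.
  by exists [::]; rewrite pop_until_stop // stack_ok_cons_sorted.
by case: ifP => _; [exists (b :: above) | apply: IH].
Qed.

Lemma run_perm inp st out : perm_eq (run inp st out) (out ++ st ++ inp).
Proof.
elim: inp st out => [|a inp IH] st out /=; first by rewrite cats0.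
apply: perm_trans (IH _ _) _.
apply/permP => P; have := congr1 (count P) (pop_until_cat a st out).
by rewrite !count_cat /=; lia.
Qed.

Lemma run_sorted_bottom inp above bot out : sorted leq bot ->
  exists2 pre, perm_eq pre (out ++ above ++ inp)
             & run inp (above ++ bot) out = pre ++ bot.
Proof.
move=> bot_sorted.
have [pre run_eq] : exists pre, run inp (above ++ bot) out = pre ++ bot.
  elim: inp above out => [|a inp IH] above out /=.
    by exists (out ++ above); rewrite catA.
  have [above' ->] := pop_until_sorted_bottom a above bot out bot_sorted.
  exact: (IH (a :: above')).
exists pre => //; rewrite -(perm_cat2r bot) -run_eq.
apply: perm_trans (run_perm _ _ _) _.
by rewrite !catA -!(catA (out ++ above)) perm_cat2l perm_catC.
Qed.

Fixpoint run_state (inp st out : seq nat) : seq nat * seq nat :=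
  match inp with
  | [::] => (st, out)
  | a :: inp' => let p := pop_until a st out in run_state inp' (a :: p.1) p.2
  end.

Lemma run_cat s1 s2 st out :
  run (s1 ++ s2) st out = run s2 (run_state s1 st out).1 (run_state s1 st out).2.
Proof. by elim: s1 st out => [|a s1 IH] st out //=. Qed.

Lemma run_state_subset inp :
  {subset (run_state inp [::] [::]).2 ++ (run_state inp [::] [::]).1 <= inp}.
Proof.
move=> y; have := run_cat inp [::] [::] [::]; rewrite cats0 /= => <-.
by rewrite (perm_mem (run_perm inp [::] [::])).
Qed.

Lemma s132_321_ltr_min_split x i : i < size x -> ltr_min x i ->
  exists pre suf,
    s132_321 x = pre ++ nth 0 x i :: suf /\ {subset drop i.+1 x <= pre}.
Proof.
move=> ix x_min; set v := nth 0 x i.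
rewrite /s132_321 -{1}(cat_take_drop i x) (drop_nth 0 ix) run_cat /=.
set st := (run_state _ _ _).1; set out := (run_state _ _ _).2.
have sorted_stack : sorted leq (v :: (pop_until v st out).1).
  apply: stack_ok_sorted_min; first exact: pop_until_ok.
  apply/allP=> y y_stack; have : y \in take i x.
    by apply: run_state_subset; rewrite -(pop_until_cat v) mem_cat y_stack orbT.
  case/(nthP 0)=> m; rewrite size_take ix => mi <-.
  by rewrite nth_take //; apply: x_min.
have [pre pre_perm ->] :=
  run_sorted_bottom (drop i.+1 x) [::] _ (pop_until v st out).2 sorted_stack.
exists pre, (pop_until v st out).1; split=> // y y_later.
by rewrite (perm_mem pre_perm) mem_cat y_later orbT.
Qed.

Theorem lemma3p1 (n : nat) (x : seq nat) (i j : nat) :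
  perm_eq x (iota 1 n) -> (i < n)%N -> (j < n)%N ->
  ltr_min x i ->
  (index (nth 0 x i) (s132_321 x) < index (nth 0 x j) (s132_321 x))%N ->
  (j < i)%N.
Proof.
move=> x_perm i_lt j_lt x_min.
have size_x : size x = n by rewrite (perm_size x_perm) size_iota.
have out_uniq : uniq (s132_321 x).
  by rewrite (perm_uniq (run_perm x [::] [::])) (perm_uniq x_perm) iota_uniq.
have i_size : i < size x by rewrite size_x.
have [pre [suf [out_eq later_pre]]] := s132_321_ltr_min_split x i i_size x_min.
case: (ltngtP i j) => [ij|//|<-]; last by rewrite ltnn.
have xj_pre : nth 0 x j \in pre.
  apply: later_pre; rewrite -(subnKC ij) -nth_drop.
  by apply: mem_nth; rewrite size_drop size_x; lia.
have xi_pre : nth 0 x i \notin pre.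
  by move: out_uniq; rewrite out_eq cat_uniq /= => /and3P[_ /norP[]].
rewrite out_eq !index_cat xj_pre (negbTE xi_pre) /= eqxx addn0.
by rewrite ltnNge ltnW ?index_mem.
Qed.
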